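(* Let $\boldsymbol{W}=\sum_{i=1}^d\lambda_i\boldsymbol{u}_i\boldsymbol{u}_i^\top$ be a positive definite density matrix ($\{\boldsymbol{u}_i\}$ orthonormal, $\lambda_i>0$, $\sum_i\lambda_i=1$) and $\boldsymbol{L}$ a fixed symmetric $d\times d$ matrix. Draw $I,J$ independently with $\Pr(I=i)=\Pr(J=i)=\lambda_i$. If $I=J$ set $\boldsymbol{w}=\boldsymbol{u}_I$; if $I\ne J$ draw a uniform sign $s\in\{-1,1\}$ and set $\boldsymbol{w}=(\boldsymbol{u}_I+s\boldsymbol{u}_J)/\sqrt2$. Let $\ell=\boldsymbol{w}^\top\boldsymbol{L}\boldsymbol{w}$ and \[ \widetilde{\boldsymbol{L}}=\begin{cases}\frac{\ell}{\lambda_I^2}\boldsymbol{u}_I\boldsymbol{u}_I^\top, & I=J,\\ \frac{s\ell}{2\lambda_I\lambda_J}(\boldsymbol{u}_I\boldsymbol{u}_J^\top+\boldsymbol{u}_J\boldsymbol{u}_I^\top), & I\ne J.\end{cases} \] Then $\|\boldsymbol{w}\|=1$, $\mathbb{E}[\boldsymbol{w}\boldsymbol{w}^\top]=\boldsymbol{W}$, and $\mathbb{E}[\widetilde{\boldsymbol{L}}]=\boldsymbol{L}$.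
   Context: A density matrix is a symmetric positive semidefinite matrix of trace $1$. *)

From HB Require Import structures.
From mathcomp Require Import all_boot all_order all_algebra.
Set Implicit Arguments. Unset Strict Implicit. Unset Printing Implicit Defensive.
Import Order.TTheory GRing.Theory Num.Theory.
Local Open Scope ring_scope.

Section Sampler.
Variables (R : rcfType) (d : nat).
Variables (lam : 'I_d -> R) (u : 'I_d -> 'cV[R]_d) (L : 'M[R]_d).

Definition vnorm (v : 'cV[R]_d) : R := Num.sqrt ((v^T *m v) 0 0).

Definition orthonormal_vecs : Prop :=
  forall i j : 'I_d, (u i)^T *m u j = (i == j)%:R%:M.

(* outcome (I, J, s) with s = 1 if b = true, s = -1 if b = false *)
Definition outcome := ('I_d * 'I_d * bool)%type.

Definition sgn (b : bool) : R := if b then 1 else -1.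

(* Pr(I=i, J=j, s) = lam i * lam j * 1/2 ; the sign is unused when I = J *)
Definition pmf (o : outcome) : R :=
  let: (i, j, _) := o in lam i * lam j / 2.

Definition wvec (o : outcome) : 'cV[R]_d :=
  let: (i, j, b) := o in
  if i == j then u i else (Num.sqrt 2)^-1 *: (u i + sgn b *: u j).

Definition ell (o : outcome) : R := ((wvec o)^T *m L *m wvec o) 0 0.

Definition Ltilde (o : outcome) : 'M[R]_d :=
  let: (i, j, b) := o in
  if i == j then (ell o / lam i ^+ 2) *: (u i *m (u i)^T)
  else (sgn b * ell o / (2 * lam i * lam j)) *: (u i *m (u j)^T + u j *m (u i)^T).

Definition Expect (X : outcome -> 'M[R]_d) : 'M[R]_d :=
  \sum_(o : outcome) pmf o *: X o.

End Sampler.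

From HB Require Import structures.
From mathcomp Require Import all_boot all_order all_algebra.
From mathcomp Require Import ring.
Import Order.TTheory GRing.Theory Num.Theory.
Local Open Scope ring_scope.

(* An orthonormal family (u_i) of d
   vectors in dimension d resolves the identity, \sum_i u_i u_i^T = 1, so
   every matrix L expands as \sum_(i,j) (u_i^T L u_j) u_i u_j^T.  Averaging
   over the random sign s kills the cross terms of w w^T and isolates the
   cross term u_i^T L u_j of ell: for every pair (I, J) = (i, j),
     sum_s w w^T = u_i u_i^T + u_j u_j^T,
     lam_i lam_j / 2 * sum_s Ltilde = (u_i^T L u_j / 2) (u_i u_j^T + u_j u_i^T).
   A symmetrisation identity for double sums then turns the expectations into
   \sum_i lam_i u_i u_i^T = W (using \sum_i lam_i = 1) and into the expansion
   of L above (using the symmetry of L).  The norm of w is computed with the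
   same quadratic expansion as ell, taking the identity as the form. *)

Lemma double_sum_sym_avg {R : numFieldType} {V : lmodType R} {n : nat}
    (F : 'I_n -> 'I_n -> V) :
  \sum_i \sum_j 2^-1 *: (F i j + F j i) = \sum_i \sum_j F i j.
Proof.
under eq_bigr => i _ do rewrite -scaler_sumr big_split /=.
rewrite -scaler_sumr big_split /= [X in _ + X]exchange_big /= -mulr2n.
by rewrite -scaler_nat scalerA mulVf ?pnatr_eq0 // scale1r.
Qed.

Lemma inv_sqrt2_sq (R : rcfType) : (Num.sqrt (2:R))^-1 * (Num.sqrt 2)^-1 = 2^-1.
Proof. by rewrite -invfM -expr2 sqr_sqrtr // ler0n. Qed.

Section BilinearForm.
Variables (R : rcfType) (d : nat).

Definition bil (M : 'M[R]_d) (x y : 'cV[R]_d) : R := (x^T *m M *m y) 0 0.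

Lemma bilDl M x y z : bil M (x + y) z = bil M x z + bil M y z.
Proof. by rewrite /bil linearD /= !mulmxDl mxE. Qed.

Lemma bilDr M x y z : bil M z (x + y) = bil M z x + bil M z y.
Proof. by rewrite /bil !mulmxDr mxE. Qed.

Lemma bilZl M a x z : bil M (a *: x) z = a * bil M x z.
Proof. by rewrite /bil linearZ /= -!scalemxAl mxE. Qed.

Lemma bilZr M a x z : bil M z (a *: x) = a * bil M z x.
Proof. by rewrite /bil -!scalemxAr mxE. Qed.

Lemma bilC M x z : M^T = M -> bil M x z = bil M z x.
Proof.
move=> hM; rewrite /bil -[in LHS](trmxK (x^T *m M *m z)) mxE.
by rewrite !trmx_mul trmxK hM mulmxA.
Qed.

(* Quadratic expansion of the form along c (x + s y); this computes both
   ell and the squared norm of w. *)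
Lemma bil_quadratic M x y c s :
  bil M (c *: (x + s *: y)) (c *: (x + s *: y)) =
  (c * c) * (bil M x x + s * (bil M x y + bil M y x) + s * s * bil M y y).
Proof. by rewrite !(bilZl, bilZr, bilDl, bilDr) mulrA; congr (_ * _); ring. Qed.

Lemma outer_quadratic (x y : 'cV[R]_d) c s :
  (c *: (x + s *: y)) *m (c *: (x + s *: y))^T =
  (c * c) *: (x *m x^T + s *: (x *m y^T + y *m x^T) + (s * s) *: (y *m y^T)).
Proof.
have trZ a (v : 'cV[R]_d) : (a *: v)^T = a *: v^T by rewrite linearZ.
rewrite trZ -scalemxAl -scalemxAr scalerA; congr (_ *: _).
rewrite linearD /= trZ.
rewrite mulmxDl !mulmxDr -!scalemxAl -!scalemxAr !scalerA !scalerDr !addrA.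
by rewrite [_ + s *: (y *m x^T)]addrAC.
Qed.

End BilinearForm.
Arguments bil {R d}.
Arguments bilC {R d M}.

Section Orthonormal.
Variables (R : rcfType) (d : nat) (u : 'I_d -> 'cV[R]_d).
Hypothesis hu : orthonormal_vecs u.

Lemma bil1_orthonormal i j : bil 1%:M (u i) (u j) = (i == j)%:R.
Proof. by rewrite /bil mulmx1 hu mxE eqxx mulr1n. Qed.

(* Completeness: d orthonormal vectors in dimension d resolve the identity.
   With U the matrix of columns u_i, U^T U = 1 forces U U^T = 1. *)
Lemma sum_outer_orthonormal : \sum_i u i *m (u i)^T = 1%:M.
Proof.
pose U : 'M[R]_d := \matrix_(k, i) u i k 0.
have UtU : U^T *m U = 1%:M.
  apply/matrixP=> i j; have := congr1 (fun A : 'M[R]_1 => A 0 0) (hu i j).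
  rewrite /= !mxE eqxx mulr1n => <-.
  by apply: eq_bigr => k _; rewrite !mxE.
apply/matrixP=> k l; rewrite -(mulmx1C UtU) summxE !mxE.
by apply: eq_bigr => i _; rewrite !mxE big_ord1 !mxE.
Qed.

Lemma matrix_expansion (M : 'M[R]_d) :
  M = \sum_i \sum_j bil M (u i) (u j) *: (u i *m (u j)^T).
Proof.
have entry i j : bil M (u i) (u j) *: (u i *m (u j)^T) =
    (u i *m (u i)^T) *m M *m (u j *m (u j)^T).
  rewrite !mulmxA -(mulmxA (u i)) -(mulmxA (u i)).
  by rewrite [(u i)^T *m M *m u j]mx11_scalar mul_mx_scalar -scalemxAl.
under eq_bigr => i _ do under eq_bigr => j _ do rewrite entry.
under eq_bigr => i _ do rewrite -mulmx_sumr.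
by rewrite -mulmx_suml -mulmx_suml sum_outer_orthonormal mul1mx mulmx1.
Qed.

Lemma wvec_unit o : vnorm (wvec u o) = 1.
Proof.
case: o => [[i j] b]; rewrite /vnorm /=.
case: eqP => [_|/eqP nij]; first by rewrite hu mxE !eqxx mulr1n sqrtr1.
set w := _ *: _.
have -> : (w^T *m w) 0 0 = bil 1%:M w w by rewrite /bil mulmx1.
rewrite bil_quadratic !bil1_orthonormal !eqxx (negbTE nij) eq_sym (negbTE nij).
by rewrite inv_sqrt2_sq -[RHS]sqrtr1; congr Num.sqrt; clear w; case: b => /=; field.
Qed.

End Orthonormal.

Section Sampler.
Variables (R : rcfType) (d : nat) (lam : 'I_d -> R) (u : 'I_d -> 'cV[R]_d).

Lemma Expect_sign_avg (X : outcome d -> 'M[R]_d) :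
  Expect lam X = \sum_i \sum_j (lam i * lam j / 2) *: (X (i, j, true) + X (i, j, false)).
Proof.
have -> : Expect lam X = \sum_(p : 'I_d * 'I_d) \sum_b pmf lam (p, b) *: X (p, b).
  by rewrite /Expect pair_bigA; apply: eq_bigr => [[p b]].
rewrite [RHS]pair_bigA; apply: eq_bigr => [[i j]] _.
by rewrite big_bool scalerDr.
Qed.

Lemma wvec_outer_sign_sum i j :
  wvec u (i, j, true) *m (wvec u (i, j, true))^T +
  wvec u (i, j, false) *m (wvec u (i, j, false))^T =
  u i *m (u i)^T + u j *m (u j)^T.
Proof.
rewrite /wvec /=; case: eqP => [->|_] //.
rewrite !outer_quadratic inv_sqrt2_sq /= mulr1 mulrNN mulr1 !scale1r scaleN1r.
rewrite -scalerDr (addrACA (_ + _)) (addrACA (u i *m _)) subrr addr0.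
by rewrite -!mulr2n -!scaler_nat -scalerDr scalerA mulVf ?pnatr_eq0 // scale1r.
Qed.

Hypothesis hsum : \sum_(i < d) lam i = 1.

Lemma Expect_outer :
  Expect lam (fun o => wvec u o *m (wvec u o)^T) = \sum_i lam i *: (u i *m (u i)^T).
Proof.
pose F i j := (lam i * lam j) *: (u i *m (u i)^T).
rewrite Expect_sign_avg.
under eq_bigr => i _ do under eq_bigr => j _ do
  rewrite wvec_outer_sign_sum mulrC -scalerA scalerDr -/(F i j) mulrC -/(F j i).
rewrite double_sum_sym_avg; apply: eq_bigr => i _.
by rewrite /F -scaler_suml -mulr_sumr hsum mulr1.
Qed.

Variable (L : 'M[R]_d).
Hypotheses (hlam : forall i, 0 < lam i) (hL : L^T = L).

(* The sign average of Ltilde isolates the cross term u_i^T L u_j of ell;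
   the weights lam_i lam_j cancel the importance-sampling denominators. *)
Lemma Ltilde_sign_sum i j :
  (lam i * lam j / 2) *: (Ltilde lam u L (i, j, true) + Ltilde lam u L (i, j, false)) =
  (bil L (u i) (u j) / 2) *: (u i *m (u j)^T + u j *m (u i)^T).
Proof.
have li := hlam i; have lj := hlam j.
rewrite /Ltilde /ell /wvec /=; case: eqP => [<-|/eqP nij].
  rewrite -scalerDl scalerA scalerDr -scalerDl; congr (_ *: _).
  by rewrite /bil; field; rewrite gt_eqF.
rewrite -!/(bil L _ _) !bil_quadratic inv_sqrt2_sq (bilC (u j) (u i) hL).
by rewrite -scalerDl scalerA; congr (_ *: _); field; rewrite !gt_eqF.
Qed.

Hypothesis hu : orthonormal_vecs u.

Lemma Expect_Ltilde : Expect lam (Ltilde lam u L) = L.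
Proof.
pose F i j := bil L (u i) (u j) *: (u i *m (u j)^T).
rewrite Expect_sign_avg.
under eq_bigr => i _ do under eq_bigr => j _ do
  rewrite Ltilde_sign_sum mulrC -scalerA scalerDr -/(F i j) (bilC _ _ hL) -/(F j i).
by rewrite double_sum_sym_avg -matrix_expansion.
Qed.

End Sampler.

Theorem lemma2 (R : rcfType) (d : nat) (lam : 'I_d -> R) (u : 'I_d -> 'cV[R]_d)
  (W L : 'M[R]_d)
  (hu : orthonormal_vecs u)
  (hlam : forall i, 0 < lam i)
  (hsum : \sum_(i < d) lam i = 1)
  (hW : W = \sum_(i < d) lam i *: (u i *m (u i)^T))
  (hL : L^T = L) :
  (forall o : outcome d, vnorm (wvec u o) = 1) /\
  Expect lam (fun o => wvec u o *m (wvec u o)^T) = W /\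
  Expect lam (Ltilde lam u L) = L.
Proof.
split; first exact: wvec_unit.
by split; [rewrite hW Expect_outer | rewrite Expect_Ltilde].
Qed.
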